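(* Let $S=[m,M]\cap\mathbb{N}$ with integers $0\leq m\leq M$, let $d\in(0,\frac12)$, and let $(G_t=(V_t,E_t))_{t\geq0}$ be a dynamic graph generated by D3G3 with $S_S=S_C=S$ and threshold $d$. Let $n_t=|V_t|$ and let $s_t=|V_t\cap V_{t+1}|$ be the number of vertices surviving from step $t$ to step $t+1$. Then, whenever $V_t\neq\emptyset$, $$\mathcal{N}^V_t=\frac{n_t}{n_t+s_t}.$$
   Context: Let $\mathbb{T}=[0,1)^2$ be the unit torus with toroidal Euclidean distance; a geometric graph with threshold $d$ on a finite point set has edges between distinct points at distance $\leq d$. D3G3 takes $d$, sets $S_S,S_C\subseteq\mathbb{N}$ and a non-null seed geometric graph $G_0$. From $G_t$, $G_{t+1}$ is obtained by applying simultaneously to each $v\in V_t$ (with $\deg(v)$ its degree in $G_t$): $v\in V_{t+1}$ (same position) iff $\deg(v)\in S_S$; if $\deg(v)\in S_C$, a brand new vertex (distinct from all vertices ever present) is added to $V_{t+1}$ at a uniformly random position. No other vertices are in $V_{t+1}$; $E_{t+1}$ follows the geometric rule. The vertices nervousness is $\mathcal{N}^V_t=\frac{|V_{t+1}\triangle V_t|}{|V_{t+1}\cup V_t|}$ with $A\triangle B=(A\cup B)\setminus(A\cap B)$. *)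

From HB Require Import structures.
From mathcomp Require Import all_boot all_order all_algebra.
From mathcomp Require Import finmap.
From mathcomp Require Import reals.
Set Implicit Arguments. Unset Strict Implicit. Unset Printing Implicit Defensive.
Import Order.TTheory GRing.Theory Num.Theory.
Local Open Scope ring_scope.
Local Open Scope fset_scope.

Section D3G3.
Variable R : realType.

Definition point := (R * R)%type.

Definition in_torus (p : point) : bool :=
  (0 <= p.1 < 1) && (0 <= p.2 < 1).

Definition tdist1 (a b : R) : R := Num.min `|a - b| (1 - `|a - b|).

Definition tdist (p q : point) : R :=
  Num.sqrt (tdist1 p.1 q.1 ^+ 2 + tdist1 p.2 q.2 ^+ 2).

Definition gdeg (d : R) (pos : nat -> point) (V : {fset nat}) (v : nat) : nat :=
  #|` [fset u in V | (u != v) && (tdist (pos u) (pos v) <= d)] |.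

(* One D3G3 step from V to V' (vertices are identifiers in nat, each with
   a fixed position pos).  child v is the brand-new vertex created by v. *)
Definition D3G3_step (d : R) (SS SC : pred nat) (pos : nat -> point)
    (past : nat -> bool) (V V' : {fset nat}) : Prop :=
  exists child : nat -> nat,
    let creators := [fset v in V | SC (gdeg d pos V v)] in
    [/\ V' = [fset v in V | SS (gdeg d pos V v)] `|` [fset child v | v in creators],
        {in creators &, injective child},
        {in creators, forall v, ~~ past (child v)}
      & {in creators, forall v, in_torus (pos (child v))}].

(* A dynamic graph (V_t)_t generated by D3G3 from a non-null seed.
   past t x  <=>  x was present at some time s <= t. *)
Definition is_D3G3 (d : R) (SS SC : pred nat) (V : nat -> {fset nat})
    (pos : nat -> point) : Prop :=
  [/\ V 0%N != fset0,
      {in V 0%N, forall v, in_torus (pos v)}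
    & forall t : nat,
        D3G3_step d SS SC pos (fun x => [exists s : 'I_t.+1, x \in V s]) (V t) (V t.+1)].

Definition vnervousness (V : nat -> {fset nat}) (t : nat) : R :=
  let A := V t.+1 in let B := V t in
  (#|` (A `|` B) `\` (A `&` B)|)%:R / (#|` A `|` B|)%:R.

Definition natint (m M : nat) : pred nat := fun k => (m <= k <= M)%N.

End D3G3.

(* When the survival and creation rules coincide, every surviving vertex also
   creates exactly one fresh vertex, so V_{t+1} consists of the s_t survivors
   and s_t newborns disjoint from V_t.  Hence |V_{t+1} u V_t| = n_t + s_t and
   the symmetric difference has n_t + 2 s_t - 2 s_t = n_t elements. *)
From HB Require Import structures.
From mathcomp Require Import all_boot all_order all_algebra.
From mathcomp Require Import finmap.
From mathcomp Require Import reals.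
Import Order.TTheory GRing.Theory Num.Theory.
Local Open Scope ring_scope.
Local Open Scope fset_scope.

Section Renewal.
Variables (K : choiceType) (A S C : {fset K}).
Hypotheses (sSA : S `<=` A) (dCA : [disjoint C & A]) (cardCS : #|` C| = #|` S|).

Lemma fsetI_renewal : A `&` (S `|` C) = S.
Proof. by rewrite fsetIUr (fsetIidPr sSA) fsetIC (eqP dCA) fsetU0. Qed.

Lemma card_renewal : #|` S `|` C| = (#|` S| + #|` S|)%N.
Proof.
have dSC : [disjoint S & C] by rewrite fdisjoint_sym (fdisjointWr sSA).
by rewrite cardfsU (eqP dSC) cardfs0 subn0 cardCS.
Qed.

Lemma card_fsetU_renewal : #|` (S `|` C) `|` A| = (#|` A| + #|` S|)%N.
Proof.
have := cardfsUI (S `|` C) A; rewrite fsetIC fsetI_renewal card_renewal => cardUI.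
by apply/eqP; rewrite -(eqn_add2r #|` S|) cardUI addnC addnA.
Qed.

Lemma card_symdiff_renewal :
  #|` ((S `|` C) `|` A) `\` ((S `|` C) `&` A)| = #|` A|.
Proof.
rewrite cardfsDS; last exact: fsubset_trans (fsubsetIl _ _) (fsubsetUl _ _).
by rewrite fsetIC fsetI_renewal card_fsetU_renewal addnK.
Qed.

End Renewal.

Lemma D3G3_step_renewal {R : realType} {d : R} {P : pred nat}
    {pos : nat -> point R} {past : nat -> bool} {V V' : {fset nat}} :
  D3G3_step d P P pos past V V' -> {in V, forall v, past v} ->
  let S := [fset v in V | P (gdeg d pos V v)] in
  exists C : {fset nat},
    [/\ V' = S `|` C, S `<=` V, [disjoint C & V] & #|` C| = #|` S|].
Proof.
move=> [child [-> child_inj child_new _]] pastV S.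
exists [fset child v | v in S]; split => //.
- by apply/fsubsetP => v; rewrite inE => /andP[].
- apply/fdisjointP => _ /imfsetP[v /= vS ->].
  by apply: contra (child_new v vS); apply: pastV.
- exact: card_in_imfset.
Qed.

Theorem theorem12 (R : realType) (m M : nat) (hmM : (m <= M)%N) (d : R)
    (hd : 0 < d < 2^-1) (V : nat -> {fset nat}) (pos : nat -> point R)
    (hG : is_D3G3 d (natint m M) (natint m M) V pos) (t : nat) :
  V t != fset0 ->
  vnervousness R V t =
    (#|` V t|)%:R / (#|` V t|%N + #|` V t `&` V t.+1|%N)%:R.
Proof.
move=> _; case: hG => _ _ /(_ t) step.
have pastVt : {in V t, forall v, [exists s : 'I_t.+1, v \in V s]}.
  by move=> v vV; apply/existsP; exists ord_max.
have [C [Vt1 sSV dCV cardC]] := D3G3_step_renewal step pastVt.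
by rewrite /vnervousness /= Vt1 card_symdiff_renewal // card_fsetU_renewal //
  fsetI_renewal.
Qed.
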